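(* Let $\alpha>0$ and let $P=\{x\in\mathbb R^d\mid \langle a_i,x\rangle\le b_i,\ 1\le i\le n\}$ be a $d$-dimensional lattice polytope, given by an irredundant system with primitive $a_i\in(\mathbb Z^d)^*$, whose normal fan is $\alpha$-canonical. Let $a_1,\dots,a_m$ be its core normals and $A_{\mathrm{core}}=\operatorname{conv}(a_1,\dots,a_m)$. Then \[ \operatorname{relint}(\alpha A_{\mathrm{core}})\cap(\mathbb Z^d)^*=\{0\}. \]
   Context: For rational $c>0$ the adjoint polytope is $P^{(c)}=\{x\mid \langle a_i,x\rangle\le b_i-c,\ 1\le i\le n\}$. The $\mathbb Q$-codegree is defined by $\operatorname{qcd}(P)^{-1}=\max\{c>0\mid P^{(c)}\neq\emptyset\}$. Put $c_0=\operatorname{qcd}(P)^{-1}$ and $\operatorname{core}P=P^{(c_0)}$. A normal $a_i$ is a core normal if $\langle a_i,y\rangle=b_i-c_0$ for all $y\in\operatorname{core}P$. The relative interior $\operatorname{relint}$ is taken with respect to the affine hull. The normal fan $\Sigma_P$ is the complete fan whose cones are $\operatorname{cone}(a_i\mid i\in I)$ with $I$ the set of facets containing a given face of $P$. For a rational polyhedral cone $\sigma$ with primitive ray generators $a_1,\dots,a_k$, the height of $y\in\sigma$ is $\max\{\sum\lambda_i\mid y=\sum\lambda_i a_i,\ \lambda_i\ge0\}$; $\sigma$ is $\alpha$-canonical if every nonzero $y\in\sigma\cap(\mathbb Z^d)^*$ has height at least $\alpha$, and a fan is $\alpha$-canonical if all its cones are. *)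

From HB Require Import structures.
From mathcomp Require Import all_boot all_order all_algebra.
Set Implicit Arguments. Unset Strict Implicit. Unset Printing Implicit Defensive.
Import Order.TTheory GRing.Theory Num.Theory.
Local Open Scope ring_scope.

Definition dotv (R : nzRingType) (d : nat) (u x : 'rV[R]_d) : R :=
  \sum_(j < d) u 0 j * x 0 j.

Definition intv (R : nzRingType) (d : nat) (z : 'rV[int]_d) : 'rV[R]_d :=
  map_mx (fun k : int => k%:~R) z.

Definition is_lattice (R : nzRingType) (d : nat) (y : 'rV[R]_d) : Prop :=
  exists z : 'rV[int]_d, y = intv R z.

Definition primitive (d : nat) (z : 'rV[int]_d) : Prop :=
  \big[gcdz/0]_(j < d) z 0 j = 1.

Definition polyh (R : realFieldType) (d n : nat)
  (a : 'I_n -> 'rV[int]_d) (b : 'I_n -> R) (x : 'rV[R]_d) : Prop :=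
  forall i, dotv (intv R (a i)) x <= b i.

Definition adjoint (R : realFieldType) (d n : nat)
  (a : 'I_n -> 'rV[int]_d) (b : 'I_n -> R) (c : R) (x : 'rV[R]_d) : Prop :=
  forall i, dotv (intv R (a i)) x <= b i - c.

Definition irredundant (R : realFieldType) (d n : nat)
  (a : 'I_n -> 'rV[int]_d) (b : 'I_n -> R) : Prop :=
  forall i, exists x : 'rV[R]_d,
    (forall j, j != i -> dotv (intv R (a j)) x <= b j) /\
    b i < dotv (intv R (a i)) x.

Definition in_conv (R : realFieldType) (d : nat) (s : seq 'rV[R]_d) (x : 'rV[R]_d) : Prop :=
  exists l : 'I_(size s) -> R,
    (forall j, 0 <= l j) /\ \sum_j l j = 1 /\ x = \sum_j l j *: s`_j.

Definition aff (R : realFieldType) (d : nat) (K : 'rV[R]_d -> Prop) (x : 'rV[R]_d) : Prop :=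
  exists s : seq 'rV[R]_d, (forall v, v \in s -> K v) /\
    exists mu : 'I_(size s) -> R, \sum_j mu j = 1 /\ x = \sum_j mu j *: s`_j.

Definition relint (R : realFieldType) (d : nat) (K : 'rV[R]_d -> Prop) (x : 'rV[R]_d) : Prop :=
  K x /\ exists eps : R, 0 < eps /\
    forall z, aff K z -> (forall j, `|z 0 j - x 0 j| < eps) -> K z.

Definition full_dim (R : realFieldType) (d : nat) (K : 'rV[R]_d -> Prop) : Prop :=
  forall x, aff K x.

Definition lattice_polytope (R : realFieldType) (d : nat) (K : 'rV[R]_d -> Prop) : Prop :=
  exists s : seq 'rV[R]_d, (forall v, v \in s -> is_lattice v) /\
    forall x, K x <-> in_conv s x.

Definition face (R : realFieldType) (d : nat) (K F : 'rV[R]_d -> Prop) : Prop :=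
  (exists x, F x) /\
  exists (w : 'rV[R]_d) (h : R), (forall y, K y -> dotv w y <= h) /\
    forall y, F y <-> (K y /\ dotv w y = h).

Definition in_cone (R : realFieldType) (d n : nat) (g : 'I_n -> 'rV[R]_d)
  (I : 'I_n -> Prop) (y : 'rV[R]_d) : Prop :=
  exists l : 'I_n -> R, (forall i, 0 <= l i) /\ (forall i, ~ I i -> l i = 0) /\
    y = \sum_i l i *: g i.

(* y has height >= alpha in cone(g_i | i in I), i.e. the maximum of sum l_i over
   representations y = sum l_i g_i, l_i >= 0, is at least alpha *)
Definition height_ge (R : realFieldType) (d n : nat) (g : 'I_n -> 'rV[R]_d)
  (I : 'I_n -> Prop) (y : 'rV[R]_d) (alpha : R) : Prop :=
  exists l : 'I_n -> R, (forall i, 0 <= l i) /\ (forall i, ~ I i -> l i = 0) /\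
    y = \sum_i l i *: g i /\ alpha <= \sum_i l i.

Definition alpha_canonical_cone (R : realFieldType) (d n : nat) (alpha : R)
  (g : 'I_n -> 'rV[R]_d) (I : 'I_n -> Prop) : Prop :=
  forall z : 'rV[int]_d, z != 0 -> in_cone g I (intv R z) ->
    height_ge g I (intv R z) alpha.

Definition facets_containing (R : realFieldType) (d n : nat)
  (a : 'I_n -> 'rV[int]_d) (b : 'I_n -> R) (F : 'rV[R]_d -> Prop) (i : 'I_n) : Prop :=
  forall y, F y -> dotv (intv R (a i)) y = b i.

Definition normal_fan_alpha_canonical (R : realFieldType) (d n : nat) (alpha : R)
  (a : 'I_n -> 'rV[int]_d) (b : 'I_n -> R) : Prop :=
  forall F, face (polyh a b) F ->
    alpha_canonical_cone alpha (fun i => intv R (a i)) (facets_containing a b F).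

Definition is_qcd_inv (R : realFieldType) (d n : nat)
  (a : 'I_n -> 'rV[int]_d) (b : 'I_n -> R) (c0 : R) : Prop :=
  0 < c0 /\ (exists y, adjoint a b c0 y) /\
  forall c, 0 < c -> (exists y, adjoint a b c y) -> c <= c0.

(* a_i is a core normal: <a_i, y> = b_i - c0 for all y in core P = P^(c0) *)
Definition core_normal (R : realFieldType) (d n : nat)
  (a : 'I_n -> 'rV[int]_d) (b : 'I_n -> R) (c0 : R) (i : 'I_n) : Prop :=
  forall y, adjoint a b c0 y -> dotv (intv R (a i)) y = b i - c0.

Definition scaled_Acore (R : realFieldType) (d n : nat)
  (a : 'I_n -> 'rV[int]_d) (b : 'I_n -> R) (c0 alpha : R) (x : 'rV[R]_d) : Prop :=
  exists l : 'I_n -> R, (forall i, 0 <= l i) /\ (forall i, ~ core_normal a b c0 i -> l i = 0) /\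
    \sum_i l i = 1 /\ x = alpha *: \sum_i l i *: intv R (a i).

(* LP duality (proved from Farkas' lemma) applied to the
     functionals -a_j, which are constant on core P, yields a convex dependence
     0 = sum_i y_i a_i whose support is exactly the set of core normals; a
     strictly positive convex dependence places 0 in the relative interior of a
     convex hull, because nearby points of the span have small coordinates.
   - A lattice point z <> 0 is not in relint K.  Otherwise (1 + t) z lies in K
     for some t > 0.  Let v maximize <z, _> over the lattice polytope P and let
     x0 be in core P.  Pairing with v - x0, the core-normal representation of
     (1 + t) z gives at most alpha c0, while alpha-canonicity of the normal cone
     of the face where z is maximized writes z with weight >= alpha on facet
     normals tight at v, giving at least (1 + t) alpha c0: a contradiction. *)
From HB Require Import structures.
From mathcomp Require Import all_boot all_order all_algebra ring lra.
From Stdlib Require Import Classical IndefiniteDescription.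
Set Implicit Arguments. Unset Strict Implicit. Unset Printing Implicit Defensive.
Import Order.TTheory GRing.Theory Num.Theory.
Local Open Scope ring_scope.

Section Pairing.
Variables (R : realFieldType) (d : nat).
Implicit Types u v x y : 'rV[R]_d.

Lemma dotvC u x : dotv u x = dotv x u.
Proof. by apply: eq_bigr => j _; rewrite mulrC. Qed.

Lemma dotvDl u v x : dotv (u + v) x = dotv u x + dotv v x.
Proof. by rewrite /dotv -big_split; apply: eq_bigr => j _; rewrite mxE mulrDl. Qed.

Lemma dotvZl k u x : dotv (k *: u) x = k * dotv u x.
Proof. by rewrite /dotv mulr_sumr; apply: eq_bigr => j _; rewrite mxE mulrA. Qed.

Lemma dotv0l x : dotv 0 x = 0.
Proof. by rewrite /dotv big1 // => j _; rewrite mxE mul0r. Qed.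

Lemma dotvNl u x : dotv (- u) x = - dotv u x.
Proof. by rewrite -scaleN1r dotvZl mulN1r. Qed.

Lemma dotvBl u v x : dotv (u - v) x = dotv u x - dotv v x.
Proof. by rewrite dotvDl dotvNl. Qed.

Lemma dotvDr u x y : dotv u (x + y) = dotv u x + dotv u y.
Proof. by rewrite dotvC dotvDl !(dotvC _ u). Qed.

Lemma dotvZr k u x : dotv u (k *: x) = k * dotv u x.
Proof. by rewrite dotvC dotvZl dotvC. Qed.

Lemma dotvBr u x y : dotv u (x - y) = dotv u x - dotv u y.
Proof. by rewrite dotvC dotvBl !(dotvC _ u). Qed.

Lemma dotv_sumZl (I : Type) (r : seq I) (P : pred I) (c : I -> R) (F : I -> 'rV[R]_d) x :
  dotv (\sum_(i <- r | P i) c i *: F i) x = \sum_(i <- r | P i) c i * dotv (F i) x.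
Proof.
elim/big_rec2: _ => [|i y1 y2 _ <-]; first by rewrite dotv0l.
by rewrite dotvDl dotvZl.
Qed.

Lemma dotv_sumZr (I : Type) (r : seq I) (P : pred I) (c : I -> R) (F : I -> 'rV[R]_d) u :
  dotv u (\sum_(i <- r | P i) c i *: F i) = \sum_(i <- r | P i) c i * dotv u (F i).
Proof. by rewrite dotvC dotv_sumZl; apply: eq_bigr => i _; rewrite dotvC. Qed.

Lemma dotv_self_gt0 u : u != 0 -> 0 < dotv u u.
Proof.
move=> nz_u; have sq_ge0 j : 0 <= u 0 j * u 0 j by rewrite -expr2 sqr_ge0.
rewrite lt_def sumr_ge0 ?andbT //; apply/eqP => /psumr_eq0P u0.
case/eqP: nz_u; apply/matrixP => i j; rewrite ord1 mxE.
by have /eqP := u0 (fun k _ => sq_ge0 k) j isT; rewrite mulf_eq0 orbb => /eqP.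
Qed.

Lemma comb_dotv_le n (g : 'I_n -> 'rV[R]_d) (mu : 'I_n -> R) w c :
  (forall i, 0 <= mu i) -> (forall i, mu i != 0 -> dotv (g i) w <= c) ->
  dotv (\sum_i mu i *: g i) w <= (\sum_i mu i) * c.
Proof.
move=> mu0 hmu; rewrite dotv_sumZl mulr_suml; apply: ler_sum => i _.
by have [->|/hmu] := eqVneq (mu i) 0; [rewrite !mul0r | exact: ler_wpM2l].
Qed.

Lemma comb_dotv_ge n (g : 'I_n -> 'rV[R]_d) (mu : 'I_n -> R) w c :
  (forall i, 0 <= mu i) -> (forall i, mu i != 0 -> c <= dotv (g i) w) ->
  (\sum_i mu i) * c <= dotv (\sum_i mu i *: g i) w.
Proof.
move=> mu0 hmu; rewrite dotv_sumZl mulr_suml; apply: ler_sum => i _.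
by have [->|/hmu] := eqVneq (mu i) 0; [rewrite !mul0r | exact: ler_wpM2l].
Qed.
End Pairing.

Lemma min_pos (R : realFieldType) (I : finType) (P : pred I) (f : I -> R) :
  (forall i, P i -> 0 < f i) -> exists2 m, 0 < m & forall i, P i -> m <= f i.
Proof.
move=> f_gt0; exists (\big[Order.min/1]_(i | P i) f i).
  by apply: (big_ind (fun x : R => 0 < x)) => // x y x0 y0; rewrite lt_min x0 y0.
by move=> i Pi; rewrite (bigD1 i) //= ge_min lexx.
Qed.

Lemma nonneg_sum_prod_eq0 (R : realFieldType) (I : finType) (y s : I -> R) :
  (forall k, 0 <= y k) -> (forall k, 0 <= s k) -> \sum_k y k * s k = 0 ->
  forall i, y i != 0 -> s i = 0.
Proof.
move=> y0 s0 /psumr_eq0P ys0 i nz_yi.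
have /eqP := ys0 (fun k _ => mulr_ge0 (y0 k) (s0 k)) i isT.
by rewrite mulf_eq0 (negbTE nz_yi) => /eqP.
Qed.

Lemma sumD1 (V : nmodType) (I : finType) (P : {set I}) j (F : I -> V) :
  j \in P -> \sum_(i in P) F i = F j + \sum_(i in P :\ j) F i.
Proof.
move=> Pj; rewrite (bigD1 j) //=; congr (_ + _); apply: eq_bigl => i.
by rewrite !inE andbC.
Qed.

Lemma farkas (R : realFieldType) (d : nat) (I : finType) :
  forall k (g : I -> 'rV[R]_d) (P : {set I}) (c : 'rV[R]_d), #|P| = k ->
  (exists l : I -> R, (forall i, 0 <= l i) /\ c = \sum_(i in P) l i *: g i) \/
  (exists h, (forall i, i \in P -> dotv (g i) h <= 0) /\ 0 < dotv c h).
Proof.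
elim=> [|k IH] g P c cardP.
  have -> : P = set0 by apply/eqP; rewrite -cards_eq0 cardP.
  have [->|nz_c] := eqVneq c 0.
    by left; exists (fun _ => 0); split => //; rewrite big_set0.
  by right; exists c; split; [move=> i; rewrite inE | exact: dotv_self_gt0].
have [j Pj] : exists j, j \in P by apply/set0Pn; rewrite -card_gt0 cardP.
have cardPj : #|P :\ j| = k by move: cardP; rewrite (cardsD1 j P) Pj add1n => -[].
case: (IH g (P :\ j) c cardPj) => [[l [l0 ->]] | [h [hg hc]]].
  left; exists (fun i => if i == j then 0 else l i); split.
    by move=> i; case: ifP.
  rewrite (sumD1 _ Pj) eqxx scale0r add0r; apply: eq_bigr => i.
  by rewrite !inE => /andP[/negbTE -> _].
have [gjh_le0|gjh_gt0] := lerP (dotv (g j) h) 0.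
  right; exists h; split => // i Pi; have [->//|nij] := eqVneq i j.
  by apply: hg; rewrite !inE nij.
(* Otherwise project everything along g j onto the hyperplane h^perp and recurse. *)
set r := dotv (g j) h; have r_neq0 : r != 0 by rewrite gt_eqF.
pose g' i := g i - (dotv (g i) h / r) *: g j.
pose c' := c - (dotv c h / r) *: g j.
case: (IH g' (P :\ j) c' cardPj) => [[mu [mu0 Ec']] | [h' [hg' hc']]].
  left.
  pose kap := dotv c h / r - \sum_(i in P :\ j) mu i * (dotv (g i) h / r).
  exists (fun i => if i == j then kap else mu i); split.
    move=> i0; case: ifP => _ //; rewrite /kap subr_ge0.
    apply: (@le_trans _ _ 0); last by apply: divr_ge0; apply: ltW.
    apply: sumr_le0 => i; rewrite !inE => /andP[nij Pi'].
    apply: mulr_ge0_le0 => //; rewrite ler_pdivrMr // mul0r.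
    by apply: hg; rewrite !inE nij Pi'.
  rewrite (sumD1 _ Pj) eqxx.
  have -> : \sum_(i in P :\ j) (if i == j then kap else mu i) *: g i =
            \sum_(i in P :\ j) mu i *: g i.
    by apply: eq_bigr => i; rewrite !inE => /andP[/negbTE -> _].
  move: Ec'; rewrite /c' /g'.
  under eq_bigr do rewrite scalerBr scalerA.
  rewrite sumrB -scaler_suml => /eqP; rewrite subr_eq => /eqP ->.
  by rewrite /kap scalerBl addrC addrA addrAC.
right; exists (h' - (dotv (g j) h' / r) *: h); split.
  move=> i Pi; rewrite dotvBr dotvZr; have [->|nij] := eqVneq i j.
    by rewrite -/r divfK // subrr.
  have := hg' i; rewrite !inE nij Pi => /(_ isT).
  rewrite /g' dotvBl dotvZl.
  suff -> : dotv (g j) h' / r * dotv (g i) h = dotv (g i) h / r * dotv (g j) h' by [].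
  by field.
move: hc'; rewrite /c' dotvBr dotvZr dotvBl dotvZl.
suff -> : dotv (g j) h' / r * dotv c h = dotv c h / r * dotv (g j) h' by [].
by field.
Qed.

Section LinearProgramming.
Variables (R : realFieldType) (d n : nat) (A : 'I_n -> 'rV[R]_d) (beta : 'I_n -> R).
Local Notation feasible x := (forall i, dotv (A i) x <= beta i).

(* Otherwise
   Farkas yields a direction h along which x0 can be improved. *)
Lemma lp_optimality_certificate (x0 c : 'rV[R]_d) :
  feasible x0 -> (forall x, feasible x -> dotv c x <= dotv c x0) ->
  exists l : 'I_n -> R, (forall i, 0 <= l i) /\
    (forall i, l i != 0 -> dotv (A i) x0 = beta i) /\ c = \sum_i l i *: A i.
Proof.
move=> feas_x0 opt_x0; pose T := [set i | dotv (A i) x0 == beta i].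
case: (@farkas R d _ _ A T c erefl) => [[l [l0 Ec]] | [h [hT hc]]].
  exists (fun i => if i \in T then l i else 0); split; first by move=> i; case: ifP.
  split; first by move=> i; case: ifP => [|_]; [rewrite inE => /eqP | rewrite eqxx].
  by rewrite Ec big_mkcond /=; apply: eq_bigr => i _; case: ifP => //; rewrite scale0r.
exfalso.
have step_gt0 i : (i \notin T) && (0 < dotv (A i) h) ->
    0 < (beta i - dotv (A i) x0) / dotv (A i) h.
  move=> /andP[iNT hi]; apply: divr_gt0 => //; rewrite subr_gt0 lt_def feas_x0 andbT.
  by move: iNT; rewrite inE eq_sym.
have [eps eps_gt0 eps_le] := min_pos step_gt0.
have feas_step : feasible (x0 + eps *: h).
  move=> i; rewrite dotvDr dotvZr; case: (boolP (i \in T)) => iT.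
    have := hT i iT; move: iT; rewrite inE => /eqP -> hi.
    by rewrite gerDl mulr_ge0_le0 // ltW.
  have [hi|hi] := lerP (dotv (A i) h) 0.
    by apply: le_trans (feas_x0 i); rewrite gerDl mulr_ge0_le0 // ltW.
  have := eps_le i; rewrite iT hi => /(_ isT).
  by rewrite ler_pdivlMr // => H; rewrite addrC -lerBrDr.
have := opt_x0 _ feas_step; rewrite dotvDr dotvZr.
by rewrite leNgt ltrDl mulr_gt0.
Qed.

(* By complementary slackness the certificate only charges constraints that are
   tight on the whole optimal face, not merely at x0. *)
Lemma optimal_face_certificate (x0 c : 'rV[R]_d) :
  feasible x0 -> (forall x, feasible x -> dotv c x <= dotv c x0) ->
  exists l : 'I_n -> R, (forall i, 0 <= l i) /\ c = \sum_i l i *: A i /\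
    forall i, l i != 0 -> forall x, feasible x -> dotv c x = dotv c x0 ->
      dotv (A i) x = beta i.
Proof.
move=> feas_x0 opt_x0.
have [l [l0 [l_tight Ec]]] := lp_optimality_certificate feas_x0 opt_x0.
exists l; do 2!split => //; move=> i nz_li x feas_x cx.
have dual_gap : \sum_k l k * (beta k - dotv (A k) x) = 0.
  under eq_bigr do rewrite mulrBr.
  rewrite sumrB -dotv_sumZl -Ec cx Ec dotv_sumZl -sumrB big1 // => k _.
  have [->|/l_tight->] := eqVneq (l k) 0; first by rewrite !mul0r subrr.
  by rewrite subrr.
have slack0 k : 0 <= beta k - dotv (A k) x by rewrite subr_ge0.
by have /eqP := nonneg_sum_prod_eq0 l0 slack0 dual_gap nz_li; rewrite subr_eq0 => /eqP.
Qed.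
End LinearProgramming.

Lemma in_conv_max (R : realFieldType) (d : nat) (s : seq 'rV[R]_d) (c x0 : 'rV[R]_d) :
  in_conv s x0 -> exists2 v, in_conv s v & forall x, in_conv s x -> dotv c x <= dotv c v.
Proof.
move=> [l0 [_ [l0_sum _]]].
have [k0 _] : exists k0 : 'I_(size s), true.
  case: (size s) l0 l0_sum => [|m] l0 l0_sum; last by exists ord0.
  by move: l0_sum; rewrite big_ord0 => /eqP; rewrite eq_sym oner_eq0.
case: (@arg_maxP _ _ _ k0 xpredT (fun k => dotv c s`_k) isT) => k1 _ k1_max.
exists s`_k1.
  exists (fun j => (j == k1)%:R); split; first by move=> j; rewrite ler0n.
  split; first by rewrite (bigD1 k1) //= eqxx big1 ?addr0 // => j /negbTE ->.
  by rewrite (bigD1 k1) //= eqxx scale1r big1 ?addr0 // => j /negbTE ->; rewrite scale0r.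
move=> x [l [l_ge0 [l_sum ->]]]; rewrite dotv_sumZr.
apply: le_trans (_ : \sum_j l j * dotv c s`_k1 <= _); last by rewrite -mulr_suml l_sum mul1r.
by apply: ler_sum => j _; apply: ler_wpM2l => //; exact: k1_max.
Qed.

Section RelativeInterior.
Variables (R : realFieldType) (d n : nat).

Definition sconv (k : R) (g : 'I_n -> 'rV[R]_d) (S : 'I_n -> Prop) (x : 'rV[R]_d) : Prop :=
  exists l : 'I_n -> R, (forall i, 0 <= l i) /\ (forall i, ~ S i -> l i = 0) /\
    \sum_i l i = 1 /\ x = k *: \sum_i l i *: g i.

(* A relative interior point x of a set containing 0 can be pushed outwards:
   (1 + t) x stays in the set for some t > 0, since it lies on the affine line
   through 0 and x. *)
Lemma relint_dilate (K : 'rV[R]_d -> Prop) (x : 'rV[R]_d) :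
  K 0 -> relint K x -> exists2 t, 0 < t & K ((1 + t) *: x).
Proof.
move=> K0 [Kx [eps [eps_gt0 near_K]]].
pose Sx := \sum_j `|x 0 j|.
have Sx1_gt0 : 0 < 1 + Sx by rewrite ltr_pwDl // sumr_ge0.
pose t := eps / (1 + Sx); have t_gt0 : 0 < t by rewrite divr_gt0.
exists t => //; apply: near_K.
  exists [:: x; 0]; split; first by move=> v; rewrite !inE => /orP[]/eqP->.
  exists (fun j : 'I_2 => if val j == 0%N then 1 + t else - t).
  by rewrite !big_ord_recl !big_ord0 /= scaler0 !addr0; split => //; ring.
move=> j; rewrite mxE.
have -> : (1 + t) * x 0 j - x 0 j = t * x 0 j by ring.
rewrite normrM (ger0_norm (ltW t_gt0)).
have -> : eps = t * (1 + Sx) by rewrite /t divfK // gt_eqF.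
by rewrite ltr_pM2l // ltr_pwDl // /Sx (bigD1 j) //= lerDl sumr_ge0.
Qed.

(* Vectors in the span of a finite family admit coefficients bounded linearly
   in their size: multiply by a pseudo-inverse of the matrix of the family. *)
Lemma span_small_coords (g : 'I_n -> 'rV[R]_d) (S : pred 'I_n) :
  exists2 B, 0 < B & forall u : 'rV[R]_d,
    (exists w : 'I_n -> R, u = \sum_(i | S i) w i *: g i) ->
    exists p : 'I_n -> R, u = \sum_(i | S i) p i *: g i /\
      forall i, `|p i| <= B * \sum_j `|u 0 j|.
Proof.
pose M : 'M[R]_(n, d) := \matrix_(i, j) (if S i then g i 0 j else 0).
have rowM (q : 'rV[R]_n) : q *m M = \sum_(i | S i) q 0 i *: g i.
  apply/matrixP => i0 j; rewrite (ord1 i0) !mxE summxE [RHS]big_mkcond /=.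
  by apply: eq_bigr => i _; rewrite !mxE; case: ifP; rewrite ?mxE ?mulr0.
pose Q := pinvmx M; pose B := 1 + \sum_i \sum_j `|Q j i|.
have Q_le_B j i : `|Q j i| <= B.
  rewrite /B (bigD1 i) //= (bigD1 j) //=.
  have : 0 <= \sum_(j' | j' != j) `|Q j' i| by rewrite sumr_ge0.
  have : 0 <= \sum_(i' | i' != i) \sum_j' `|Q j' i'|.
    by apply: sumr_ge0 => i' _; exact: sumr_ge0.
  lra.
exists B.
  by rewrite ltr_pwDl // sumr_ge0 // => i _; exact: sumr_ge0.
move=> u [w uE].
have u_in_M : (u <= M)%MS.
  suff -> : u = (\row_i w i) *m M by exact: submxMl.
  by rewrite rowM uE; apply: eq_bigr => i _; rewrite mxE.
exists (fun i => (u *m Q) 0 i); split; first by rewrite -rowM mulmxKpV.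
move=> i; rewrite mxE mulr_sumr; apply: le_trans (ler_norm_sum _ _ _) _.
apply: ler_sum => j _; rewrite normrM mulrC.
by apply: ler_wpM2r; [exact: normr_ge0 | exact: Q_le_B].
Qed.

Lemma aff_sconv_span (k : R) (g : 'I_n -> 'rV[R]_d) (S : 'I_n -> Prop) (Sb : pred 'I_n) :
  (forall i, S i -> Sb i) -> forall z, aff (sconv k g S) z ->
  exists w : 'I_n -> R, z = \sum_(i | Sb i) w i *: (k *: g i).
Proof.
move=> S_Sb z [s [s_in [mu [_ ->]]]].
pose W x := exists w : 'I_n -> R, x = \sum_(i | Sb i) w i *: (k *: g i).
apply: (big_ind W).
- by exists (fun _ => 0); rewrite big1 // => i _; rewrite scale0r.
- move=> _ _ [w1 ->] [w2 ->]; exists (fun i => w1 i + w2 i).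
  by rewrite -big_split; apply: eq_bigr => i _; rewrite scalerDl.
move=> j _; have [l [_ [l_supp [_ ->]]]] := s_in _ (mem_nth 0 (ltn_ord j)).
exists (fun i => mu j * l i); rewrite !scaler_sumr [RHS]big_mkcond /=.
apply: eq_bigr => i _; case: ifP => [_|/negbT NSb].
  by rewrite !scalerA mulrAC.
by rewrite l_supp ?scale0r ?scaler0 // => /S_Sb; apply/negP.
Qed.

(* A strictly positive affine dependence 0 = sum_i y i g i (y i > 0 exactly on
   S, sum y = 1) puts the origin in the relative interior of k * conv(g i | S i):
   a nearby point z of the affine hull is sum_i p i (k g i) with small p, and
   y + p - (sum p) y is a valid convex weight for it. *)
Lemma relint_sconv0 (k : R) (g : 'I_n -> 'rV[R]_d) (S : 'I_n -> Prop) (y : 'I_n -> R) :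
  (forall i, 0 <= y i) -> (forall i, S i <-> 0 < y i) -> \sum_i y i = 1 ->
  \sum_i y i *: g i = 0 -> relint (sconv k g S) 0.
Proof.
move=> y_ge0 S_y y_sum y_dep.
have y_supp i : ~ S i -> y i = 0.
  by move=> NSi; apply/eqP; rewrite eq_le y_ge0 andbT leNgt; apply/negP => /S_y.
split; first by exists y; do 3!split => //; rewrite y_dep scaler0.
pose Sb i := 0 < y i.
have [B B_gt0 small] := span_small_coords (fun i => k *: g i) Sb.
have [m m_gt0 m_le] := min_pos (fun i (h : Sb i) => h).
have n1_gt0 : 0 < n%:R + 1 :> R by rewrite ltr_pwDr.
pose eps := m / ((n%:R + 1) * (B * d.+1%:R)).
have eps_gt0 : 0 < eps by rewrite divr_gt0 // !mulr_gt0.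
exists eps; split => // z aff_z near_z.
have [p [zE p_small]] := small z (aff_sconv_span (fun i => (S_y i).1) aff_z).
pose del := m / (n%:R + 1).
have del_eq : n%:R * del + del = m by rewrite /del; field; rewrite gt_eqF.
have z_size : \sum_j `|z 0 j| <= d.+1%:R * eps.
  apply: le_trans (_ : \sum_(j < d) eps <= _).
    by apply: ler_sum => j _; have := near_z j; rewrite mxE subr0 => /ltW.
  rewrite sumr_const card_ord -[eps *+ d]mulr_natl.
  by apply: ler_wpM2r; [exact: ltW eps_gt0 | rewrite ler_nat].
pose q i := if Sb i then p i else 0.
have q_le i : `|q i| <= del.
  rewrite /q; case: ifP => _; last by rewrite normr0 divr_ge0 // ltW.
  apply: le_trans (p_small i) _; apply: le_trans (ler_wpM2l (ltW B_gt0) z_size) _.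
  rewrite /eps /del le_eqVlt; apply/orP; left; apply/eqP; field.
  by rewrite nat1r !gt_eqF ?ltr0Sn.
pose P := \sum_i q i.
have P_le : `|P| <= n%:R * del.
  apply: le_trans (ler_norm_sum _ _ _) _; apply: le_trans (ler_sum _ (fun i _ => q_le i)) _.
  by rewrite sumr_const card_ord mulr_natl.
exists (fun i => y i + q i - P * y i); split; [|split; [|split]].
- move=> i; rewrite /q; case: ifP => [Sbi|/negbT NSbi]; last first.
    have y0 : y i = 0 by apply/eqP; rewrite eq_le y_ge0 andbT leNgt.
    by rewrite y0 mulr0 subr0 addr0.
  have y_le1 : y i <= 1 by rewrite -y_sum (bigD1 i) //= lerDl sumr_ge0.
  have := m_le i Sbi; have := q_le i; rewrite /q Sbi ler_norml => /andP[hp _].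
  have : P * y i <= `|P|.
    by apply: le_trans (ler_norm _) _; rewrite normrM (ger0_norm (y_ge0 i)) ler_piMr.
  lra.
- by move=> i /y_supp y0; rewrite /q /Sb y0 ltxx mulr0 subr0 addr0.
- by rewrite sumrB big_split /= -mulr_sumr y_sum mulr1 addrK.
rewrite zE big_mkcond /= (eq_bigr (fun i => q i *: (k *: g i))); last first.
  by move=> i _; rewrite /q; case: ifP; rewrite ?scale0r.
under eq_bigr do rewrite scalerA mulrC -scalerA.
rewrite -scaler_sumr; congr (_ *: _).
under eq_bigr do rewrite scalerBl scalerDl -scalerA.
by rewrite sumrB big_split /= -scaler_sumr y_dep scaler0 add0r subr0.
Qed.
End RelativeInterior.

Section CoreNormals.
Variables (R : realFieldType) (d n : nat) (a : 'I_n -> 'rV[int]_d) (b : 'I_n -> R) (c0 : R).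
Local Notation A i := (intv R (a i)).
Local Notation C := (core_normal a b c0).

(* Some normal is a core normal: otherwise each inequality is strict somewhere on
   core P, the average of these points has uniform positive slack m, and the
   adjoint polytope P^(c0 + m) is nonempty, contradicting the maximality of c0. *)
Lemma core_normal_exists : is_qcd_inv a b c0 -> exists j, C j.
Proof.
move=> [c0_gt0 [[x0 core_x0] c0_max]]; apply: NNPP => no_core.
have strict i : exists x, adjoint a b c0 x /\ dotv (A i) x < b i - c0.
  apply: NNPP => Nstrict; apply: no_core; exists i => x core_x; apply: NNPP => ne.
  apply: Nstrict; exists x; split => //; rewrite lt_def (core_x i) andbT.
  by apply/eqP => E; apply: ne; rewrite E.
have [X X_spec] := functional_choice _ strict.
have [n0|n_gt0] := posnP n.
  have : c0 + 1 <= c0.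
    apply: c0_max; first by rewrite addr_gt0.
    by exists x0 => i; have := ltn_ord i; rewrite {2}n0.
  lra.
have nR_gt0 : 0 < n%:R :> R by rewrite ltr0n.
pose xbar := \sum_i (n%:R)^-1 *: X i.
have slack k : 0 < b k - c0 - dotv (A k) xbar.
  have avg : \sum_(i < n) (n%:R)^-1 * (b k - c0) = b k - c0.
    rewrite sumr_const card_ord -[_ * (b k - c0) *+ n]mulr_natl.
    by rewrite mulrA mulfV ?mul1r // gt_eqF.
  rewrite subr_gt0 /xbar dotv_sumZr -[X in _ < X]avg.
  rewrite (bigD1 k) //= [X in _ < X](bigD1 k) //=.
  apply: ltr_leD; first by rewrite ltr_pM2l ?invr_gt0 //; exact: (X_spec k).2.
  by apply: ler_sum => i _; rewrite ler_pM2l ?invr_gt0 //; exact: (X_spec i).1 k.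
have [m m_gt0 m_le] := @min_pos R _ predT _ (fun k _ => slack k).
have : c0 + m <= c0.
  apply: c0_max; first by rewrite addr_gt0.
  by exists xbar => i; have := m_le i isT; lra.
lra.
Qed.

(* For a core normal a_j, the functional -a_j is constant, hence maximal, on
   core P; its optimal-face certificate is a nonnegative combination of core
   normals equal to -a_j, i.e. a dependence among core normals charging a_j. *)
Lemma core_normal_dependence x0 j : adjoint a b c0 x0 -> C j ->
  exists y : 'I_n -> R, (forall i, 0 <= y i) /\ 1 <= y j /\
    (forall i, y i != 0 -> C i) /\ \sum_i y i *: A i = 0.
Proof.
move=> core_x0 Cj.
have opt x : adjoint a b c0 x -> dotv (- A j) x <= dotv (- A j) x0.
  by move=> core_x; rewrite !dotvNl (Cj x core_x) (Cj x0 core_x0).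
have [l [l_ge0 [El l_face]]] :=
  @optimal_face_certificate R d n (fun i => A i) (fun i => b i - c0) x0 (- A j) core_x0 opt.
exists (fun i => l i + (i == j)%:R); split; first by move=> i; rewrite addr_ge0.
split; first by rewrite eqxx lerDr.
split.
  move=> i /=; have [-> _ //|_] := eqVneq i j; rewrite addr0 => nz_li x core_x.
  by apply: l_face => //; rewrite !dotvNl (Cj x core_x) (Cj x0 core_x0).
under eq_bigr do rewrite scalerDl.
rewrite big_split /= -El (bigD1 j) //= eqxx scale1r big1 ?addr0 ?addNr //.
by move=> i /negbTE ->; rewrite scale0r.
Qed.

(* Summing these dependences over all core normals and normalizing gives a
   convex dependence 0 = sum_i y i a_i whose support is exactly the core normals. *)
Lemma core_certificate : is_qcd_inv a b c0 ->
  exists y : 'I_n -> R, (forall i, 0 <= y i) /\ (forall i, C i <-> 0 < y i) /\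
    \sum_i y i = 1 /\ \sum_i y i *: A i = 0.
Proof.
move=> hq; have [j0 Cj0] := core_normal_exists hq.
case: hq => [_ [[x0 core_x0] _]].
pose cert j (y : 'I_n -> R) := [/\ forall i, 0 <= y i, forall i, y i != 0 -> C i,
  \sum_i y i *: A i = 0 & C j -> 1 <= y j].
have [f f_spec] : exists f : 'I_n -> 'I_n -> R, forall j, cert j (f j).
  apply: (functional_choice cert) => j; case: (classic (C j)) => [Cj|NCj].
    have [y [y_ge0 [yj [y_supp y_dep]]]] := core_normal_dependence core_x0 Cj.
    by exists y; split.
  exists (fun _ => 0); split => // [i|]; first by rewrite eqxx.
  by rewrite big1 // => i _; rewrite scale0r.
pose Y i := \sum_j f j i.
have Y_ge0 i : 0 <= Y i by apply: sumr_ge0 => j _; case: (f_spec j).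
have Y_core i : C i -> 1 <= Y i.
  move=> Ci; rewrite /Y (bigD1 i) //=; have [_ _ _ /(_ Ci) fii] := f_spec i.
  by rewrite -[1]addr0 lerD // sumr_ge0 // => j _; case: (f_spec j).
have Y_supp i : Y i != 0 -> C i.
  move=> nzY; apply: NNPP => NCi; case/eqP: nzY; apply: big1 => j _.
  apply/eqP; apply: contraT => nz_fji; case: NCi; by case: (f_spec j) => _ /(_ i nz_fji).
have Y_dep : \sum_i Y i *: A i = 0.
  under eq_bigr do rewrite scaler_suml.
  by rewrite exchange_big big1 // => j _; case: (f_spec j).
pose s := \sum_i Y i.
have s_gt0 : 0 < s.
  rewrite /s (bigD1 j0) //=; apply: (lt_le_trans ltr01).
  by apply: le_trans (Y_core j0 Cj0) _; rewrite lerDl sumr_ge0.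
exists (fun i => Y i / s); split; first by move=> i; rewrite divr_ge0 // ltW.
split.
  move=> i; split => [/Y_core Yi|]; first by rewrite divr_gt0 // (lt_le_trans ltr01).
  by rewrite pmulr_lgt0 ?invr_gt0 // => Yi; apply: Y_supp; rewrite gt_eqF.
split; first by rewrite -mulr_suml divff // gt_eqF.
under eq_bigr do rewrite mulrC -scalerA.
by rewrite -scaler_sumr Y_dep scaler0.
Qed.
End CoreNormals.

Lemma intv0 (R : nzRingType) (d : nat) : intv R (0 : 'rV[int]_d) = 0.
Proof. by apply/matrixP => i j; rewrite !mxE. Qed.

Section LatticePointsOfCore.
Variables (R : realFieldType) (d n : nat) (alpha : R).
Variables (a : 'I_n -> 'rV[int]_d) (b : 'I_n -> R) (c0 : R).
Local Notation A i := (intv R (a i)).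
Local Notation K := (scaled_Acore a b c0 alpha).

Lemma zero_in_relint_core : is_qcd_inv a b c0 -> relint K 0.
Proof.
move=> hq; have [y [y_ge0 [C_y [y_sum y_dep]]]] := core_certificate hq.
exact: (relint_sconv0 alpha y_ge0 C_y y_sum y_dep).
Qed.

Lemma canonical_weight_at_max (z : 'rV[int]_d) (v : 'rV[R]_d) :
  normal_fan_alpha_canonical alpha a b -> z != 0 -> polyh a b v ->
  (forall x, polyh a b x -> dotv (intv R z) x <= dotv (intv R z) v) ->
  exists mu : 'I_n -> R, (forall i, 0 <= mu i) /\
    (forall i, mu i != 0 -> dotv (A i) v = b i) /\
    intv R z = \sum_i mu i *: A i /\ alpha <= \sum_i mu i.
Proof.
move=> fan_can nz_z P_v v_max.
pose F y := polyh a b y /\ dotv (intv R z) y = dotv (intv R z) v.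
have face_F : face (polyh a b) F.
  by split; [exists v | exists (intv R z), (dotv (intv R z) v); split => // y].
have [l [l_ge0 [Ez l_face]]] :=
  @optimal_face_certificate R d n (fun i => A i) b v (intv R z) P_v v_max.
have z_cone : in_cone (fun i => A i) (facets_containing a b F) (intv R z).
  exists l; do 2!split => //; move=> i Ni; apply/eqP; apply: contraT => nz_li.
  by case: Ni => y [P_y Ey]; exact: l_face.
have [mu [mu_ge0 [mu_supp [Emu mu_sum]]]] := fan_can F face_F z nz_z z_cone.
exists mu; split => //; split => // i nz_mui.
case: (classic (facets_containing a b F i)) => [Fi|/mu_supp mui0]; first exact: Fi.
by move: nz_mui; rewrite mui0 eqxx.
Qed.

(* A nonzero lattice point z in relint(alpha A_core) is impossible: push it to
   (1 + t) z inside alpha A_core and pair with v - x0, where v maximizes z over P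
   and x0 lies in core P.  Core normals give <(1 + t) z, v - x0> <= alpha c0,
   whereas alpha-canonicity at v gives >= (1 + t) alpha c0. *)
Lemma relint_core_lattice_point (z : 'rV[int]_d) :
  0 < alpha -> lattice_polytope (polyh a b) -> normal_fan_alpha_canonical alpha a b ->
  is_qcd_inv a b c0 -> relint K (intv R z) -> z = 0.
Proof.
move=> alpha_gt0 [s [_ P_conv]] fan_can hq z_rel.
have [t t_gt0 [m [m_ge0 [m_supp [m_sum Em]]]]] :=
  relint_dilate (zero_in_relint_core hq).1 z_rel.
case: hq => [c0_gt0 [[x0 core_x0] _]].
apply/eqP; apply: contraT => nz_z; exfalso.
have P_x0 : polyh a b x0.
  by move=> i; apply: le_trans (core_x0 i) _; rewrite gerBl ltW.
have [v conv_v v_max] := in_conv_max (intv R z) ((P_conv x0).1 P_x0).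
have P_v : polyh a b v := (P_conv v).2 conv_v.
have [mu [mu_ge0 [mu_tight [Ez mu_sum]]]] :=
  canonical_weight_at_max fan_can nz_z P_v (fun x P_x => v_max x ((P_conv x).1 P_x)).
pose D := dotv ((1 + t) *: intv R z) (v - x0).
have D_le : D <= alpha * c0.
  rewrite /D Em dotvZl ler_wpM2l ?(ltW alpha_gt0) // -[c0]mul1r -m_sum.
  apply: comb_dotv_le => // i nz_mi.
  have Ci : core_normal a b c0 i by apply: NNPP => /m_supp mi0; rewrite mi0 eqxx in nz_mi.
  by rewrite dotvBr (Ci x0 core_x0); have := P_v i; lra.
have D_ge : (1 + t) * (alpha * c0) <= D.
  have tight_ge i : mu i != 0 -> c0 <= dotv (A i) (v - x0).
    by move=> nz_mui; rewrite dotvBr (mu_tight i nz_mui); have := core_x0 i; lra.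
  rewrite /D dotvZl Ez ler_wpM2l ?addr_ge0 ?(ltW t_gt0) //.
  by apply: le_trans (comb_dotv_ge mu_ge0 tight_ge); rewrite ler_wpM2r ?(ltW c0_gt0).
have : 0 < t * (alpha * c0) by rewrite !mulr_gt0.
by rewrite mulrDl mul1r in D_ge; lra.
Qed.
End LatticePointsOfCore.

Theorem lemma3p7 (R : realFieldType) (d n : nat) (alpha : R)
  (a : 'I_n -> 'rV[int]_d) (b : 'I_n -> R) (c0 : R) :
  0 < alpha ->
  lattice_polytope (polyh a b) ->
  full_dim (polyh a b) ->
  irredundant a b ->
  (forall i, primitive (a i)) ->
  normal_fan_alpha_canonical alpha a b ->
  is_qcd_inv a b c0 ->
  forall z : 'rV[int]_d,
    relint (scaled_Acore a b c0 alpha) (intv R z) <-> z = 0.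
Proof.
move=> alpha_gt0 P_lattice _ _ _ fan_can hq z; split.
  exact: relint_core_lattice_point alpha_gt0 P_lattice fan_can hq.
by move=> ->; rewrite intv0; exact: zero_in_relint_core.
Qed.
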